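(* In an ordinal setting with indifference classes, let $f:\Sigma\to O$ be a social choice function. (i) If $f$ is pseudomonotone, then for every $\varepsilon>0$ there is a lex-truthful randomized mechanism that $\varepsilon$-implements $f$. (ii) Conversely, if for some $\varepsilon<\frac12$ there is a lex-truthful randomized mechanism that $\varepsilon$-implements $f$, then $f$ is pseudomonotone.
   Context: Setting: a set $N$ of $n$ agents and a finite set $O$ of outcomes. For each agent $j$ there is a fixed partition of $O$ into indifference classes $O^j_1,\dots,O^j_{m_j}$; each allowed preference $\succeq_j\in\Sigma_j$ is a strict total order on these classes, and $\Sigma=\prod_j\Sigma_j$. For $o\in O$, $\mathrm{pos}_{\succeq_j}(o)\in[m_j]$ is the rank under $\succeq_j$ of the class containing $o$; $o\succeq_j o'$ iff $\mathrm{pos}_{\succeq_j}(o)\le\mathrm{pos}_{\succeq_j}(o')$ and $o\succ_j o'$ iff $\mathrm{pos}_{\succeq_j}(o)<\mathrm{pos}_{\succeq_j}(o')$. A social choice function is a map $f:\Sigma\to O$. $f$ is pseudomonotone if for every agent $j$, every $\succeq_{-j}$, and all $\succeq_j,\succeq'_j\in\Sigma_j$, with $o=f(\succeq_j,\succeq_{-j})$, $o'=f(\succeq'_j,\succeq_{-j})$: either $o\succeq_j o'$, or there is $o''$ with $o''\succ_j o'$ and $\mathrm{pos}_{\succeq_j}(o'')<\mathrm{pos}_{\succeq'_j}(o'')$. A randomized mechanism maps profiles to distributions over $O$ and $\varepsilon$-implements $f$ if $\Pr[\mathcal{M}(\succeq)=f(\succeq)]\ge1-\varepsilon$ for every profile.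 For a lottery $p$ and $S\subseteq O$ let $p(S)=\sum_{o\in S}p(o)$. Given $\succeq_j$ and lotteries $p,q$, $p$ lex-dominates $q$ w.r.t. $\succeq_j$ if there is $r\in[m_j]$ such that, listing $j$'s classes in the order of $\succeq_j$, $p$ gives strictly more total probability than $q$ to the $r$-th class and the same total probability to each of the first $r-1$ classes. $\mathcal{M}$ is lex-truthful if for all $j$, all profiles $\succeq$ and all $\succeq'_j\in\Sigma_j$, either $\mathcal{M}(\succeq)$ and $\mathcal{M}(\succeq'_j,\succeq_{-j})$ assign the same total probability to each class $O^j_r$, or $\mathcal{M}(\succeq)$ lex-dominates $\mathcal{M}(\succeq'_j,\succeq_{-j})$ w.r.t. $\succeq_j$. *)

From mathcomp Require Import all_boot all_order all_algebra all_fingroup.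
From mathcomp Require Import reals.
Set Implicit Arguments. Unset Strict Implicit. Unset Printing Implicit Defensive.
Import Order.TTheory GRing.Theory Num.Theory.
Local Open Scope ring_scope.

(* Agent j's indifference classes are
   indexed by 'I_(m j); cls j o is the class of outcome o.  A preference of
   agent j is a strict total order on its classes, represented by a permutation
   r : {perm 'I_(m j)} sending each class to its rank (0 = best). *)

Section Setting.
Variables (n : nat) (O : finType) (m : 'I_n -> nat)
          (cls : forall j : 'I_n, O -> 'I_(m j))
          (Sigma : forall j : 'I_n, {set {perm 'I_(m j)}}).

Definition profile := forall j : 'I_n, {perm 'I_(m j)}.

Definition valid_profile (p : profile) : Prop := forall j, p j \in Sigma j.

Definition upd (p : profile) (j : 'I_n) (r : {perm 'I_(m j)}) : profile :=
  dfwith (T := fun k => {perm 'I_(m k)}) p r.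

Definition pos (j : 'I_n) (r : {perm 'I_(m j)}) (o : O) : nat := r (cls j o).

Definition pseudomonotone (f : profile -> O) : Prop :=
  forall (j : 'I_n) (p : profile) (r' : {perm 'I_(m j)}),
    valid_profile p -> r' \in Sigma j ->
    let o := f p in let o' := f (upd p r') in
    (pos (p j) o <= pos (p j) o')%N \/
    exists o'' : O, (pos (p j) o'' < pos (p j) o')%N /\
                    (pos (p j) o'' < pos r' o'')%N.

Variable R : realType.

Definition is_lottery (q : {ffun O -> R}) : Prop :=
  (forall o, 0 <= q o) /\ \sum_(o : O) q o = 1.

Definition is_mechanism (M : profile -> {ffun O -> R}) : Prop :=
  forall p, valid_profile p -> is_lottery (M p).

Definition cmass (q : {ffun O -> R}) (j : 'I_n) (c : 'I_(m j)) : R :=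
  \sum_(o : O | cls j o == c) q o.

(* q1 lex-dominates q2 w.r.t. r: the class at rank k is (r^-1 k) *)
Definition lex_dominates (j : 'I_n) (r : {perm 'I_(m j)})
    (q1 q2 : {ffun O -> R}) : Prop :=
  exists k : 'I_(m j),
    cmass q2 ((r^-1)%g k) < cmass q1 ((r^-1)%g k) /\
    forall k' : 'I_(m j), (k' < k)%N ->
      cmass q1 ((r^-1)%g k') = cmass q2 ((r^-1)%g k').

Definition lex_truthful (M : profile -> {ffun O -> R}) : Prop :=
  forall (j : 'I_n) (p : profile) (r' : {perm 'I_(m j)}),
    valid_profile p -> r' \in Sigma j ->
    (forall c : 'I_(m j), cmass (M p) c = cmass (M (upd p r')) c) \/
    lex_dominates (p j) (M p) (M (upd p r')).

Definition eps_implements (M : profile -> {ffun O -> R}) (eps : R)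
    (f : profile -> O) : Prop :=
  forall p, valid_profile p -> 1 - eps <= M p (f p).

End Setting.

From mathcomp Require Import all_boot all_order all_algebra all_fingroup.
From mathcomp Require Import reals lra.
From mathcomp Require boolp.
Import Order.TTheory GRing.Theory Num.Theory.
Set Implicit Arguments. Unset Strict Implicit. Unset Printing Implicit Defensive.
Local Open Scope ring_scope.

(* (i) The mechanism plays f(p) with probability 1 - n d and, with probability
   d for each agent i, an outcome of a lottery giving the classes of i masses
   that strictly decrease with their reported rank.  If agent j reports r'
   instead of r, the class masses listed in r-order change by
   a (delta_t - delta_t') + d (w - w o g), where t, t' are the r-ranks of f(p),
   f(p') and g = r' o r^-1.  The least rank moved by g is moved down, so the
   second term is lexicographically positive; the first one dominates with a
   negative sign only if t' < t, and then pseudomonotonicity provides a rank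
   s < t' that g moves down.
   (ii) If pseudomonotonicity fails, r' orders the classes above the class of
   f(p') exactly as r does, whereas eps < 1/2 forces the deviation to strictly
   increase the mass of that class.  Lex-truthfulness of the deviation and of
   its reverse then compare the same leading classes in opposite directions. *)

Lemma ord_gtn_eqF (m : nat) (i j : 'I_m) : (i < j)%N -> (j == i) = false.
Proof. by move=> lt_ij; rewrite -val_eqE gtn_eqF. Qed.

Lemma perm_least_moved (m : nat) (g : {perm 'I_m}) :
  g = 1%g \/
  exists k0 : 'I_m, (k0 < g k0)%N /\ forall k : 'I_m, (k < k0)%N -> g k = k.
Proof.
case: (pickP (fun k => g k != k)) => [x gx | fixed]; last first.
  by left; apply/permP => k; rewrite perm1; apply/eqP/negbNE; rewrite fixed.
right; case: (@arg_minnP _ x (fun k => g k != k) val gx) => k0 gk0 k0_min.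
have fix_below (k : 'I_m) : (k < k0)%N -> g k = k.
  by move=> lt_k; apply/eqP/negbNE/negP => /k0_min; rewrite leqNgt lt_k.
exists k0; split=> //; rewrite ltnNge leq_eqVlt negb_or gk0 /=.
apply/negP => /fix_below /(@perm_inj _ g) gk0_eq.
by rewrite gk0_eq eqxx in gk0.
Qed.

Lemma perm_fix_prefix (m : nat) (g : {perm 'I_m}) (t : nat) :
  (forall k : 'I_m, (k < t)%N -> (g k <= k)%N) ->
  forall k : 'I_m, (k < t)%N -> g k = k.
Proof.
move=> le_g k lt_kt; case: (perm_least_moved g) => [-> | [k0 [lt_k0 fix_k0]]].
  by rewrite perm1.
apply: fix_k0; apply: leq_trans lt_kt _; rewrite leqNgt; apply/negP.
by move=> /le_g; rewrite leqNgt lt_k0.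
Qed.

Definition lex_nonneg (R : numDomainType) (m : nat) (E : 'I_m -> R) : Prop :=
  (forall k, E k = 0) \/
  exists k, 0 < E k /\ forall k' : 'I_m, (k' < k)%N -> E k' = 0.

(* [E k] is the mass lost at true rank [k] when the outcome moves from rank
   [t] to rank [t'] and the reported ranks are permuted by [g]. *)
Lemma lex_nonneg_deviation (R : realDomainType) (m : nat) (g : {perm 'I_m})
    (t t' : 'I_m) (a d : R) (w : 'I_m -> R) (E : 'I_m -> R) :
  0 < a -> 0 < d -> (forall x y : 'I_m, (x < y)%N -> w y < w x) ->
  (forall k, E k = a * ((t == k)%:R - (t' == k)%:R) + d * (w k - w (g k))) ->
  (t <= t')%N \/ (exists s : 'I_m, (s < t')%N /\ (s < g s)%N) ->
  lex_nonneg E.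
Proof.
move=> a_gt0 d_gt0 w_decr E_def t_le.
have [g1 | [k0 [lt_k0 fix_k0]]] := perm_least_moved g.
  have {}t_le : (t <= t')%N.
    by case: t_le => // -[s [_]]; rewrite g1 perm1 ltnn.
  have E_id k : E k = a * ((t == k)%:R - (t' == k)%:R).
    by rewrite E_def g1 perm1 subrr mulr0 addr0.
  case: (ltngtP t t') t_le => [lt_tt' _ | // | /val_inj eq_tt' _].
    right; exists t; rewrite E_id eqxx ord_gtn_eqF // subr0 mulr1; split=> //.
    move=> k lt_kt; rewrite E_id (ord_gtn_eqF lt_kt).
    by rewrite (ord_gtn_eqF (ltn_trans lt_kt lt_tt')) subrr mulr0.
  by left => k; rewrite E_id eq_tt' subrr mulr0.
have u_k0 : 0 < d * (w k0 - w (g k0)) by rewrite mulr_gt0 // subr_gt0 w_decr.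
have E_below (k : 'I_m) : (k < k0)%N -> (k < t)%N -> (k < t')%N -> E k = 0.
  by move=> ? ? ?; rewrite E_def fix_k0 // !ord_gtn_eqF // !subrr; lra.
have witness_k0 : (k0 < t)%N -> (k0 < t')%N -> lex_nonneg E.
  move=> lt_k0t lt_k0t'; right; exists k0; split.
    by rewrite E_def !ord_gtn_eqF //; lra.
  by move=> k lt_k; apply: E_below => //; exact: ltn_trans lt_k _.
case: (ltngtP t t') => [lt_tt' | lt_t't | /val_inj eq_tt'].
- have [lt_k0t | le_tk0] := ltnP k0 t.
    exact: witness_k0 (ltn_trans lt_k0t lt_tt').
  have u_t : 0 <= d * (w t - w (g t)).
    have [lt_tk0 | le_k0t] := ltnP t k0; first by rewrite fix_k0 // subrr mulr0.
    have -> : t = k0 by apply/val_inj/eqP; rewrite eqn_leq le_k0t le_tk0.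
    exact: ltW.
  right; exists t; split.
    by rewrite E_def eqxx ord_gtn_eqF // subr0 mulr1; lra.
  move=> k lt_kt; apply: E_below => //; first exact: leq_trans lt_kt le_tk0.
  exact: ltn_trans lt_kt lt_tt'.
- case: t_le => [| [s [lt_st' lt_s]]]; first by rewrite leqNgt lt_t't.
  have le_k0s : (k0 <= s)%N.
    by rewrite leqNgt; apply: contraL lt_s => /fix_k0 ->; rewrite ltnn.
  apply: witness_k0; last exact: leq_ltn_trans le_k0s lt_st'.
  exact: ltn_trans (leq_ltn_trans le_k0s lt_st') lt_t't.
- right; exists k0; split; first by rewrite E_def eq_tt' subrr; lra.
  by move=> k lt_k; rewrite E_def eq_tt' fix_k0 // !subrr; lra.
Qed.

Section RankLottery.
Variables (R : realFieldType) (O : finType) (k : nat) (cl : O -> 'I_k).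

Definition rank_weight (i : nat) : R :=
  (k - i)%:R / (\sum_(l < k) (k - l))%:R.

Lemma rank_weight_ge0 i : 0 <= rank_weight i.
Proof. by rewrite divr_ge0. Qed.

Lemma rank_weight_ltn (i l : nat) :
  (i < l)%N -> (l < k)%N -> rank_weight l < rank_weight i.
Proof.
move=> lt_il lt_lk; have lt_ik := ltn_trans lt_il lt_lk.
have sum_gt0 : (0 < \sum_(l < k) (k - l))%N.
  by rewrite (bigD1 (Ordinal lt_ik)) //= ltn_addr // subn_gt0.
by rewrite ltr_pM2r ?invr_gt0 ?ltr0n // ltr_nat ltn_sub2l.
Qed.

Lemma sum_rank_weight (r : {perm 'I_k}) :
  (0 < k)%N -> \sum_(c < k) rank_weight (r c) = 1.
Proof.
move=> k_gt0.
rewrite -(reindex_inj (P := xpredT) (F := fun c : 'I_k => rank_weight c)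
                     (@perm_inj _ r)) /=.
rewrite -mulr_suml -natr_sum divff // pnatr_eq0 -lt0n.
rewrite (bigD1 (Ordinal k_gt0)) //= subn0.
exact: ltn_addr.
Qed.

Definition class_lottery (r : {perm 'I_k}) (o : O) : R :=
  rank_weight (r (cl o)) / #|[pred x | cl x == cl o]|%:R.

Lemma class_lottery_ge0 r o : 0 <= class_lottery r o.
Proof. by rewrite divr_ge0 ?rank_weight_ge0. Qed.

Lemma sum_class_lottery r (c : 'I_k) :
  (exists o, cl o = c) ->
  \sum_(o | cl o == c) class_lottery r o = rank_weight (r c).
Proof.
move=> [o0 cl_o0]; rewrite /class_lottery.
rewrite (eq_bigr (fun=> rank_weight (r c) / #|[pred x | cl x == c]|%:R)); last first.
  by move=> o /eqP ->.
rewrite (eq_bigl (mem [pred x | cl x == c])) // sumr_const.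
rewrite -(mulr_natr (rank_weight (r c) / _)) divfK //.
by rewrite pnatr_eq0 -lt0n; apply/card_gt0P; exists o0; rewrite inE cl_o0.
Qed.

Lemma sum_class_lottery_all r :
  (forall c, exists o, cl o = c) -> (0 < k)%N -> \sum_o class_lottery r o = 1.
Proof.
move=> cl_surj k_gt0; rewrite (partition_big cl xpredT) //=.
rewrite -[RHS](sum_rank_weight r k_gt0); apply: eq_bigr => c _.
exact: sum_class_lottery.
Qed.

End RankLottery.

Section ClassMasses.
Variables (n : nat) (O : finType) (m : 'I_n -> nat)
          (cls : forall j : 'I_n, O -> 'I_(m j)) (R : realType).

Lemma cmass_ge (q : {ffun O -> R}) (j : 'I_n) (x : O) :
  is_lottery q -> q x <= cmass cls q (cls j x).
Proof. by move=> [q_ge0 _]; rewrite /cmass (bigD1 x) //= lerDl sumr_ge0. Qed.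

Lemma cmass_le_compl (q : {ffun O -> R}) (j : 'I_n) (x : O) (c : 'I_(m j)) :
  is_lottery q -> cls j x != c -> cmass cls q c <= 1 - q x.
Proof.
move=> [q_ge0 q_sum1] ne_xc; rewrite -q_sum1 (bigID (fun o => cls j o == c)) /=.
by rewrite -addrA lerDl (bigD1 x) //= addrC addKr sumr_ge0.
Qed.

(* The two lexicographic comparisons scan the same classes up to rank t,
   so their first differences cannot point in opposite directions. *)
Lemma lex_dominates_asym (j : 'I_n) (r r' : {perm 'I_(m j)})
    (q1 q2 : {ffun O -> R}) (t : 'I_(m j)) :
  (forall k : 'I_(m j), (k < t)%N -> (r^-1)%g k = (r'^-1)%g k) ->
  cmass cls q1 ((r^-1)%g t) < cmass cls q2 ((r^-1)%g t) ->
  lex_dominates cls r q1 q2 -> ~ lex_dominates cls r' q2 q1.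
Proof.
move=> agree lt_t [k [lt1 eq1]] [k2 [lt2 eq2]].
have lt_kt : (k < t)%N.
  case: (ltngtP k t) => [// | lt_tk | /val_inj eq_kt].
    by move: lt_t; rewrite eq1 // ltxx.
  by move: lt1; rewrite eq_kt; lra.
case: (ltngtP k2 k) => [lt_k2k | lt_kk2 | /val_inj eq_k2k].
- by move: lt2; rewrite -agree ?(ltn_trans lt_k2k) // eq1 // ltxx.
- by move: lt1; rewrite agree // eq2 // ltxx.
- by move: lt1 lt2; rewrite eq_k2k agree //; lra.
Qed.

Lemma lex_dominates_of_lex_nonneg (j : 'I_n) (r : {perm 'I_(m j)})
    (q1 q2 : {ffun O -> R}) :
  lex_nonneg (fun k => cmass cls q1 ((r^-1)%g k) - cmass cls q2 ((r^-1)%g k)) ->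
  (forall c : 'I_(m j), cmass cls q1 c = cmass cls q2 c) \/
  lex_dominates cls r q1 q2.
Proof.
case=> [eq0 | [k [gt0 eq0]]]; [left => c | right; exists k; split].
- by have := eq0 (r c); rewrite permK; lra.
- by rewrite -subr_gt0.
- by move=> k' lt_k'; apply/eqP; rewrite -subr_eq0 eq0.
Qed.

End ClassMasses.

Section Deviation.
Variables (n : nat) (m : 'I_n -> nat).
Implicit Types (p : profile m) (j : 'I_n).

Lemma upd_eq p j (r : {perm 'I_(m j)}) : upd p r j = r.
Proof. exact: dfwith_in. Qed.

Lemma upd_neq p j (r : {perm 'I_(m j)}) (i : 'I_n) : j != i -> upd p r i = p i.
Proof. exact: dfwith_out. Qed.

Lemma upd_updK p j (r : {perm 'I_(m j)}) : upd (upd p r) (p j) = p.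
Proof.
apply: boolp.functional_extensionality_dep => i.
have [<- | ne_ji] := eqVneq j i; first by rewrite upd_eq.
by rewrite !upd_neq.
Qed.

Lemma valid_upd (Sigma : forall j, {set {perm 'I_(m j)}}) p j
    (r : {perm 'I_(m j)}) :
  valid_profile Sigma p -> r \in Sigma j -> valid_profile Sigma (upd p r).
Proof.
move=> vp r_in i; have [<- | ne_ji] := eqVneq j i; first by rewrite upd_eq.
by rewrite upd_neq.
Qed.

End Deviation.

Section MixMechanism.
Variables (R : realType) (n : nat) (O : finType) (m : 'I_n -> nat)
          (cls : forall j : 'I_n, O -> 'I_(m j)) (f : profile m -> O).
Hypothesis cls_surj : forall (j : 'I_n) (c : 'I_(m j)), exists o : O, cls j o = c.

Definition mix_mechanism (d : R) (p : profile m) : {ffun O -> R} :=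
  [ffun o => (1 - n%:R * d) * (o == f p)%:R +
             d * \sum_(i < n) class_lottery R (cls i) (p i) o].

Lemma sum_class_indicator (j : 'I_n) (x : O) (c : 'I_(m j)) :
  \sum_(o | cls j o == c) (o == x)%:R = (cls j x == c)%:R :> R.
Proof.
rewrite big_mkcond (bigD1 x) //= eqxx big1 ?addr0; first by case: (cls j x == c).
by move=> o /negbTE ->; case: (cls j o == c).
Qed.

Lemma cmass_mix_mechanism d p j (c : 'I_(m j)) :
  cmass cls (mix_mechanism d p) c =
  (1 - n%:R * d) * (cls j (f p) == c)%:R +
  d * \sum_(i < n) \sum_(o | cls j o == c) class_lottery R (cls i) (p i) o.
Proof.
rewrite /cmass; under eq_bigr do rewrite ffunE.
by rewrite big_split /= -!mulr_sumr sum_class_indicator exchange_big.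
Qed.

Lemma cmass_mix_mechanism_upd d p j (r' : {perm 'I_(m j)}) (c : 'I_(m j)) :
  cmass cls (mix_mechanism d p) c - cmass cls (mix_mechanism d (upd p r')) c =
  (1 - n%:R * d) * ((cls j (f p) == c)%:R - (cls j (f (upd p r')) == c)%:R) +
  d * (rank_weight R (m j) (p j c) - rank_weight R (m j) (r' c)).
Proof.
rewrite !(@cmass_mix_mechanism _ _ j); set p' := upd p r'.
have -> : \sum_(i < n) \sum_(o | cls j o == c) class_lottery R (cls i) (p' i) o =
          \sum_(i < n) \sum_(o | cls j o == c) class_lottery R (cls i) (p i) o
          - rank_weight R (m j) (p j c) + rank_weight R (m j) (r' c).
  rewrite (bigD1 j) //= [in RHS](bigD1 j) //= {1}/p' upd_eq !sum_class_lottery //.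
  rewrite (eq_bigr (fun i => \sum_(o | cls j o == c) class_lottery R (cls i) (p i) o))
    => [|i ne_ij]; first lra.
  by rewrite /p' upd_neq 1?eq_sym.
lra.
Qed.

Lemma mix_mechanism_is_mechanism (Sigma : forall j, {set {perm 'I_(m j)}}) d :
  0 <= d -> n%:R * d <= 1 -> is_mechanism Sigma (mix_mechanism d).
Proof.
move=> d_ge0 nd_le1 p _; split=> [o | ].
  rewrite ffunE addr_ge0 ?mulr_ge0 ?subr_ge0 ?sumr_ge0 // => i _.
  exact: class_lottery_ge0.
under eq_bigr do rewrite ffunE.
rewrite big_split /= -!mulr_sumr exchange_big /=.
rewrite (bigD1 (f p)) //= eqxx big1 ?addr0 => [|o /negbTE -> //].
rewrite (eq_bigr (fun=> 1)) => [|i _]; last first.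
  apply: sum_class_lottery_all => //.
  exact: leq_ltn_trans (ltn_ord (cls i (f p))).
by rewrite sumr_const card_ord mulr1; lra.
Qed.

Lemma mix_mechanism_implements (Sigma : forall j, {set {perm 'I_(m j)}}) d eps :
  0 <= d -> n%:R * d <= eps -> eps_implements Sigma (mix_mechanism d) eps f.
Proof.
move=> d_ge0 nd_le p _; rewrite ffunE eqxx mulr1.
have : 0 <= d * \sum_(i < n) class_lottery R (cls i) (p i) (f p).
  by rewrite mulr_ge0 // sumr_ge0 // => i _; exact: class_lottery_ge0.
lra.
Qed.

Lemma mix_mechanism_lex_truthful (Sigma : forall j, {set {perm 'I_(m j)}}) d :
  pseudomonotone cls Sigma f -> 0 < d -> n%:R * d < 1 ->
  lex_truthful cls Sigma (mix_mechanism d).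
Proof.
move=> pm d_gt0 nd_lt1 j p r' vp r'_in; apply: lex_dominates_of_lex_nonneg.
pose r := p j; pose t x := r (cls j x).
apply: (@lex_nonneg_deviation _ _ (r^-1 * r')%g (t (f p)) (t (f (upd p r')))
          (1 - n%:R * d) d (fun k => rank_weight R (m j) k)).
- by rewrite subr_gt0.
- done.
- by move=> x y lt_xy; apply: rank_weight_ltn.
- move=> k; rewrite cmass_mix_mechanism_upd /t -!(canF_eq (permK r)).
  by rewrite permKV permM.
- have [le | [o'' [lt1 lt2]]] := pm j p r' vp r'_in; [by left | right].
  by exists (t o''); rewrite permM permK.
Qed.

End MixMechanism.

Lemma pseudomonotone_of_lex_truthful (R : realType) (n : nat) (O : finType)
    (m : 'I_n -> nat) (cls : forall j : 'I_n, O -> 'I_(m j))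
    (cls_surj : forall (j : 'I_n) (c : 'I_(m j)), exists o : O, cls j o = c)
    (Sigma : forall j : 'I_n, {set {perm 'I_(m j)}})
    (f : profile m -> O) (eps : R) (M : profile m -> {ffun O -> R}) :
  eps < 2^-1 -> is_mechanism Sigma M -> lex_truthful cls Sigma M ->
  eps_implements Sigma M eps f -> pseudomonotone cls Sigma f.
Proof.
move=> lt_eps mech truthful impl j p r' vp r'_in /=.
set p' := upd p r'; set r := p j; set o := f p; set o' := f p'.
have vp' : valid_profile Sigma p' by exact: valid_upd.
rewrite /pos -/r; case: leqP => [| lt_o'o]; [by left | right].
set t' := r (cls j o').
have [/existsP [o'' /andP [] ] | no_better] :=
  boolP [exists o'',
           (r (cls j o'') < t')%N && (r (cls j o'') < r' (cls j o''))%N].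
  by exists o''.
exfalso.
have agree (k : 'I_(m j)) : (k < t')%N -> (r^-1)%g k = (r'^-1)%g k.
  move=> lt_kt; apply: (@perm_inj _ r'); rewrite permKV -permM.
  apply: perm_fix_prefix lt_kt => {}k lt_kt.
  have [x cls_x] := cls_surj j ((r^-1)%g k).
  move: no_better; rewrite negb_exists => /forallP/(_ x).
  by rewrite cls_x permKV lt_kt /= permM -leqNgt.
have gap : cmass cls (M p) (cls j o') < cmass cls (M p') (cls j o').
  have ne_oo' : cls j o != cls j o'.
    by apply: contraTneq lt_o'o => ->; rewrite ltnn.
  have := cmass_le_compl (mech p vp) ne_oo'.
  have := cmass_ge cls j o' (mech p' vp').
  have := impl p vp; have := impl p' vp'; rewrite -/o -/o'; lra.
have [eq_mass | dom] := truthful j p r' vp r'_in.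
  by move: gap; rewrite eq_mass ltxx.
have [eq_mass | dom'] := truthful j p' r vp' (vp j).
  by move: gap; rewrite eq_mass upd_updK ltxx.
move: dom'; rewrite upd_updK /p' upd_eq; apply: (lex_dominates_asym agree) dom.
by rewrite permK.
Qed.

Theorem theorem5 (R : realType) (n : nat) (O : finType) (m : 'I_n -> nat)
    (cls : forall j : 'I_n, O -> 'I_(m j))
    (cls_surj : forall (j : 'I_n) (c : 'I_(m j)), exists o : O, cls j o = c)
    (Sigma : forall j : 'I_n, {set {perm 'I_(m j)}})
    (f : profile m -> O) :
  (pseudomonotone cls Sigma f ->
     forall eps : R, 0 < eps ->
       exists M : profile m -> {ffun O -> R},
         [/\ is_mechanism Sigma M, lex_truthful cls Sigma M
           & eps_implements Sigma M eps f]) /\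
  ((exists eps : R, eps < 2^-1 /\
      exists M : profile m -> {ffun O -> R},
        [/\ is_mechanism Sigma M, lex_truthful cls Sigma M
          & eps_implements Sigma M eps f]) ->
     pseudomonotone cls Sigma f).
Proof.
split=> [pm eps eps_gt0 | [eps [lt_eps [M [mech truthful impl]]]]]; last first.
  exact: (pseudomonotone_of_lex_truthful cls_surj lt_eps mech truthful impl).
pose c := Num.min eps 1; pose d := c / (n%:R + 1).
have c_gt0 : 0 < c by rewrite lt_min eps_gt0 ltr01.
have c_le : c <= eps /\ c <= 1 by rewrite !ge_min !lexx orbT.
have d_gt0 : 0 < d by rewrite divr_gt0 // ltr_wpDl.
have nd_lt_c : n%:R * d < c.
  by rewrite /d mulrA ltr_pdivrMr ?ltr_wpDl // mulrDr mulr1 mulrC ltrDl.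
exists (mix_mechanism cls f d); split.
- by apply: (mix_mechanism_is_mechanism f cls_surj); [exact: ltW | lra].
- by apply: (mix_mechanism_lex_truthful cls_surj) => //; lra.
- by apply: mix_mechanism_implements; [exact: ltW | lra].
Qed.
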